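(* Let $k$ be a commutative ring and let $H$ be an FH-algebra over $k$ with FH-homomorphism $f$ and right norm $t$ (so $f(tx)=\epsilon(x)$ for all $x\in H$). Let $b\in H$ be the right distinguished group-like element, i.e. the element with $gf=g(b)f$ for every $g\in H^*$. Then $$\sum t_2\otimes t_1=\sum b^{-1}S^2(t_1)\otimes t_2 \quad\text{in } H\otimes_k H,$$ where $\Delta(t)=\sum t_1\otimes t_2$ and $S$ is the antipode.
   Context: An FH-algebra over a commutative ring $k$ is a $k$-bialgebra $H$ which is a Frobenius algebra ($H$ finitely generated projective over $k$ and there are $f\in H^*=\mathrm{Hom}_k(H,k)$ and $x_i,y_i\in H$ with $\sum_i x_i f(y_ia)=a=\sum_i f(ax_i)y_i$ for all $a\in H$) whose Frobenius homomorphism $f$ is a right integral in $H^*$, i.e. $\sum f(a_1)a_2=f(a)1$ for all $a\in H$; such $f$ is called an FH-homomorphism. An FH-algebra automatically has a bijective antipode $S$. $H^*$ carries the convolution product $(gh)(x)=\sum g(x_1)h(x_2)$, with unit $\epsilon$. A right norm $t\in H$ (with respect to $f$) is an element with $f(tx)=\epsilon(x)$ for all $x\in H$; it satisfies $ta=\epsilon(a)t$. *)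

From HB Require Import structures.
From mathcomp Require Import all_boot all_algebra.
Set Implicit Arguments. Unset Strict Implicit. Unset Printing Implicit Defensive.
Import GRing.Theory.
Local Open Scope ring_scope.

(* an element is represented by a finite list of elementary tensors          *)
(* [:: (a1,b1); ...] standing for  a1 (x) b1 + ...  and two lists denote     *)
(* the same tensor iff they are related by the smallest equivalence relation *)
(* compatible with concatenation, commutative, and satisfying bi-additivity, *)
(* k-balancedness and (0 (x) b) = 0.  Since every generator then has an      *)
(* additive inverse ((-a) (x) b), this quotient monoid is exactly the        *)
(* abelian group H (x)_k H.                                                  *)

Section Tensor.
Variables (k : comPzRingType) (H : lmodType k).

Definition tens2 := seq (H * H).

Inductive teq2 : tens2 -> tens2 -> Prop :=
| teq2_refl s : teq2 s s
| teq2_sym s t : teq2 s t -> teq2 t s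
| teq2_trans s t u : teq2 s t -> teq2 t u -> teq2 s u
| teq2_cat s s' t t' : teq2 s s' -> teq2 t t' -> teq2 (s ++ t) (s' ++ t')
| teq2_catC s t : teq2 (s ++ t) (t ++ s)
| teq2_addl a a' b : teq2 [:: (a + a', b)] [:: (a, b); (a', b)]
| teq2_addr a b b' : teq2 [:: (a, b + b')] [:: (a, b); (a, b')]
| teq2_scale (r : k) a b : teq2 [:: (r *: a, b)] [:: (a, r *: b)]
| teq2_zero b : teq2 [:: (0, b)] [::].

Definition tens3 := seq (H * H * H).

Inductive teq3 : tens3 -> tens3 -> Prop :=
| teq3_refl s : teq3 s s
| teq3_sym s t : teq3 s t -> teq3 t s
| teq3_trans s t u : teq3 s t -> teq3 t u -> teq3 s u
| teq3_cat s s' t t' : teq3 s s' -> teq3 t t' -> teq3 (s ++ t) (s' ++ t')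
| teq3_catC s t : teq3 (s ++ t) (t ++ s)
| teq3_add1 a a' b c : teq3 [:: (a + a', b, c)] [:: (a, b, c); (a', b, c)]
| teq3_add2 a b b' c : teq3 [:: (a, b + b', c)] [:: (a, b, c); (a, b', c)]
| teq3_add3 a b c c' : teq3 [:: (a, b, c + c')] [:: (a, b, c); (a, b, c')]
| teq3_scale12 (r : k) a b c : teq3 [:: (r *: a, b, c)] [:: (a, r *: b, c)]
| teq3_scale23 (r : k) a b c : teq3 [:: (a, r *: b, c)] [:: (a, b, r *: c)]
| teq3_zero b c : teq3 [:: (0, b, c)] [::].

End Tensor.

Section FH.
Variables (k : comPzRingType) (H : algType k).

Definition klinear_form (g : H -> k) :=
  forall (r : k) (a b : H), g (r *: a + b) = r * g a + g b.

Definition klinear_endo (S : H -> H) :=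
  forall (r : k) (a b : H), S (r *: a + b) = r *: S a + S b.

(* H is finitely generated projective over k (dual basis characterization) *)
Definition fg_projective :=
  exists n (e : 'I_n -> H) (phi : 'I_n -> H -> k),
    (forall i, klinear_form (phi i)) /\
    forall a, a = \sum_(i < n) phi i a *: e i.

(* Delta : H -> H (x) H given by representatives; epsilon : H -> k *)
Definition is_bialgebra (Delta : H -> tens2 H) (eps : H -> k) :=
  [/\
      (forall (r : k) a b, teq2 (Delta (r *: a + b))
          ([seq (r *: p.1, p.2) | p <- Delta a] ++ Delta b)),
      (forall a b, teq2 (Delta (a * b))
          [seq (p.1 * q.1, p.2 * q.2) | p <- Delta a, q <- Delta b]),
      teq2 (Delta 1) [:: (1, 1)],
      (forall a, teq3
          (flatten [seq [seq (q.1, q.2, p.2) | q <- Delta p.1] | p <- Delta a])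
          (flatten [seq [seq (p.1, q.1, q.2) | q <- Delta p.2] | p <- Delta a]))
    &
    [/\ klinear_form eps, (forall a b, eps (a * b) = eps a * eps b), eps 1 = 1
    & forall a, \sum_(p <- Delta a) eps p.1 *: p.2 = a /\
              \sum_(p <- Delta a) eps p.2 *: p.1 = a]].

Definition is_frobenius_hom (f : H -> k) :=
  klinear_form f /\
  exists n (x y : 'I_n -> H),
    forall a, \sum_(i < n) f (y i * a) *: x i = a /\
              \sum_(i < n) f (a * x i) *: y i = a.

Definition is_right_integral (Delta : H -> tens2 H) (f : H -> k) :=
  forall a, \sum_(p <- Delta a) f p.1 *: p.2 = f a *: 1.

Definition is_FH_algebra (Delta : H -> tens2 H) (eps : H -> k) (f : H -> k) :=
  [/\ is_bialgebra Delta eps, fg_projective, is_frobenius_hom f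
    & is_right_integral Delta f].

Definition is_antipode (Delta : H -> tens2 H) (eps : H -> k) (S : H -> H) :=
  klinear_endo S /\
  forall a, \sum_(p <- Delta a) S p.1 * p.2 = eps a *: 1 /\
            \sum_(p <- Delta a) p.1 * S p.2 = eps a *: 1.

Definition is_right_norm (eps : H -> k) (f : H -> k) (t : H) :=
  forall x, f (t * x) = eps x.

Definition conv (Delta : H -> tens2 H) (g h : H -> k) : H -> k :=
  fun x => \sum_(p <- Delta x) g p.1 * h p.2.

Definition is_right_distinguished (Delta : H -> tens2 H) (f : H -> k) (b : H) :=
  forall g : H -> k, klinear_form g ->
    forall x, conv Delta g f x = g b * f x.

End FH.

From mathcomp Require Import all_boot all_algebra ring.
Set Implicit Arguments.
Unset Strict Implicit.
Unset Printing Implicit Defensive.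
Import GRing.Theory.
Local Open Scope ring_scope.

(* Since f is a Frobenius form, a tensor u is determined by the elements
   (id (x) f(_ a)) u, a in H; so it suffices to show that
   sum f(t1 a) t2 and sum f(t2 a) b^-1 S^2(t1) agree for every a.  The first is
   S(a), by the classical integral/antipode identity and f(t x) = eps(x).  For
   the second, phi(a) := sum f(t2 a) t1 satisfies S(phi(a)) b = a by the very
   definition of b, so S(phi(a)) = a b^-1; and as b is group-like,
   S(a b^-1) = b S(a), whence the second element is b^-1 b S(a) = S(a) too. *)

Section Tensor.
Variables (k : comPzRingType) (H : lmodType k).
Implicit Types (s t u : tens2 H).

Definition balanced2 {M : zmodType} (B : H -> H -> M) :=
  [/\ (forall a a' c, B (a + a') c = B a c + B a' c),
      (forall a c c', B a (c + c') = B a c + B a c') &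
      (forall (r : k) a c, B (r *: a) c = B a (r *: c))].

Definition balanced3 {M : zmodType} (F : H -> H -> H -> M) :=
  [/\ (forall a a' c d, F (a + a') c d = F a c d + F a' c d),
      (forall a c c' d, F a (c + c') d = F a c d + F a c' d),
      (forall a c d d', F a c (d + d') = F a c d + F a c d'),
      (forall (r : k) a c d, F (r *: a) c d = F a (r *: c) d) &
      (forall (r : k) a c d, F a (r *: c) d = F a c (r *: d))].

Lemma eq_big_teq2 (M : zmodType) (B : H -> H -> M) : balanced2 B ->
  forall s s', teq2 s s' -> \sum_(p <- s) B p.1 p.2 = \sum_(p <- s') B p.1 p.2.
Proof.
case=> BDl BDr BZ s s'; elim => //=.
- by move=> ? ? ? _ -> _ ->.
- by move=> ? ? ? ? _ e1 _ e2; rewrite !big_cat e1 e2.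
- by move=> ? ?; rewrite !big_cat /= addrC.
- by move=> a a' c; rewrite !big_cons !big_nil /= BDl !addr0.
- by move=> a c c'; rewrite !big_cons !big_nil /= BDr !addr0.
- by move=> r a c; rewrite !big_seq1 BZ.
- move=> c; rewrite big_seq1 big_nil /=.
  by apply: (addrI (B 0 c)); rewrite -BDl !addr0.
Qed.

Lemma eq_big_teq3 (M : zmodType) (F : H -> H -> H -> M) : balanced3 F ->
  forall s s' : tens3 H, teq3 s s' ->
  \sum_(p <- s) F p.1.1 p.1.2 p.2 = \sum_(p <- s') F p.1.1 p.1.2 p.2.
Proof.
case=> FD1 FD2 FD3 FZ12 FZ23 s s'; elim => //=.
- by move=> ? ? ? _ -> _ ->.
- by move=> ? ? ? ? _ e1 _ e2; rewrite !big_cat e1 e2.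
- by move=> ? ?; rewrite !big_cat /= addrC.
- by move=> *; rewrite !big_cons !big_nil /= FD1 !addr0.
- by move=> *; rewrite !big_cons !big_nil /= FD2 !addr0.
- by move=> *; rewrite !big_cons !big_nil /= FD3 !addr0.
- by move=> *; rewrite !big_seq1 FZ12.
- by move=> *; rewrite !big_seq1 FZ23.
- move=> c d; rewrite big_seq1 big_nil /=.
  by apply: (addrI (F 0 c d)); rewrite -FD1 !addr0.
Qed.

Lemma teq2_catl s t u : teq2 t u -> teq2 (s ++ t) (s ++ u).
Proof. by move=> h; apply: teq2_cat => //; apply: teq2_refl. Qed.

Lemma teq2_catr s t u : teq2 t u -> teq2 (t ++ s) (u ++ s).
Proof. by move=> h; apply: teq2_cat => //; apply: teq2_refl. Qed.

Lemma teq2_cat_cons s g t : teq2 (s ++ g :: t) (g :: s ++ t).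
Proof.
rewrite -cat1s catA -[g :: s ++ t]cat1s catA.
by apply: teq2_catr; apply: teq2_catC.
Qed.

Lemma teq2_map (I : Type) (l : seq I) (F G : I -> H * H) :
  (forall i, teq2 [:: F i] [:: G i]) -> teq2 (map F l) (map G l).
Proof.
move=> h; elim: l => [|i l IH] /=; first exact: teq2_refl.
exact: (@teq2_cat _ _ [:: F i] [:: G i]).
Qed.

Lemma teq2_map_zero (I : Type) (l : seq I) (Y : I -> H) :
  teq2 [seq (0, Y i) | i <- l] [::].
Proof.
elim: l => [|i l IH] /=; first exact: teq2_refl.
exact: (@teq2_cat _ _ [:: (0, Y i)] [::] _ [::] (teq2_zero _) IH).
Qed.

Lemma teq2_zeror (a : H) : teq2 [:: (a, 0)] [::].
Proof.
apply: (@teq2_trans _ _ _ [:: ((0 : k) *: a, 0)]).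
  by rewrite -{1}(scale0r (0 : H)); apply/teq2_sym/teq2_scale.
by rewrite scale0r; apply: teq2_zero.
Qed.

Lemma teq2_sumr (I : Type) (l : seq I) (a : H) (W : I -> H) :
  teq2 [:: (a, \sum_(i <- l) W i)] [seq (a, W i) | i <- l].
Proof.
elim: l => [|i l IH] /=; first by rewrite big_nil; apply: teq2_zeror.
rewrite big_cons; apply: teq2_trans (teq2_addr _ _ _) _.
exact: (@teq2_cat _ _ [:: (a, W i)] [:: (a, W i)] _ _ (teq2_refl _)).
Qed.

Lemma teq2_map_addl (I : Type) (l : seq I) (F G Y : I -> H) :
  teq2 ([seq (F i, Y i) | i <- l] ++ [seq (G i, Y i) | i <- l])
       [seq (F i + G i, Y i) | i <- l].
Proof.
elim: l => [|i l IH] /=; first exact: teq2_refl.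
apply: (@teq2_trans _ _ _ ([:: (F i, Y i); (G i, Y i)] ++
   ([seq (F i, Y i) | i <- l] ++ [seq (G i, Y i) | i <- l]))).
  by rewrite -[X in teq2 X _]cat1s; apply/teq2_catl/teq2_cat_cons.
apply: (@teq2_trans _ _ _ ([:: (F i, Y i); (G i, Y i)] ++
   [seq (F i + G i, Y i) | i <- l])); first exact: teq2_catl.
by rewrite -[X in teq2 _ X]cat1s; apply/teq2_catr/teq2_sym/teq2_addl.
Qed.

Lemma teq2_coord (I : Type) (l : seq I) (Y : I -> H) (c : H -> I -> k) :
  (forall v, v = \sum_(i <- l) c v i *: Y i) ->
  forall s, teq2 s [seq (\sum_(p <- s) c p.2 i *: p.1, Y i) | i <- l].
Proof.
move=> hc; elim => [|[a v] s IH].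
  under eq_map => i do rewrite big_nil.
  exact/teq2_sym/teq2_map_zero.
under eq_map => i do rewrite big_cons.
apply: teq2_trans; last exact: teq2_map_addl.
rewrite -cat1s.
apply: teq2_cat IH; rewrite /= {1}(hc v).
apply: teq2_trans; first exact: teq2_sumr.
by apply: teq2_map => i; apply/teq2_sym/teq2_scale.
Qed.

End Tensor.

Section LinearMaps.
Variables (k : comPzRingType) (H : algType k).

Lemma klinear_formD (g : H -> k) : klinear_form g -> forall a c, g (a + c) = g a + g c.
Proof. by move=> hg a c; rewrite -[a]scale1r hg mul1r scale1r. Qed.

Lemma klinear_form0 (g : H -> k) : klinear_form g -> g 0 = 0.
Proof. by move=> hg; apply: (addrI (g 0)); rewrite -klinear_formD // !addr0. Qed.

Lemma klinear_formZ (g : H -> k) : klinear_form g -> forall r a, g (r *: a) = r * g a.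
Proof. by move=> hg r a; rewrite -[r *: a]addr0 hg klinear_form0 // addr0. Qed.

Lemma klinear_form_sum (g : H -> k) : klinear_form g ->
  forall (I : Type) (s : seq I) (F : I -> H), g (\sum_(i <- s) F i) = \sum_(i <- s) g (F i).
Proof.
move=> hg I s F; elim: s => [|i s IH]; first by rewrite !big_nil klinear_form0.
by rewrite !big_cons klinear_formD // IH.
Qed.

Lemma klinear_form_mulr (g : H -> k) c : klinear_form g -> klinear_form (fun u => g (u * c)).
Proof. by move=> hg r a d /=; rewrite mulrDl -scalerAl hg. Qed.

Lemma klinear_endoD (g : H -> H) : klinear_endo g -> forall a c, g (a + c) = g a + g c.
Proof. by move=> hg a c; rewrite -[a]scale1r hg !scale1r. Qed.

Lemma klinear_endo0 (g : H -> H) : klinear_endo g -> g 0 = 0.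
Proof. by move=> hg; apply: (addrI (g 0)); rewrite -klinear_endoD // !addr0. Qed.

Lemma klinear_endoZ (g : H -> H) : klinear_endo g -> forall r a, g (r *: a) = r *: g a.
Proof. by move=> hg r a; rewrite -[r *: a]addr0 hg klinear_endo0 // addr0. Qed.

Lemma klinear_endo_sum (g : H -> H) : klinear_endo g ->
  forall (I : Type) (s : seq I) (F : I -> H), g (\sum_(i <- s) F i) = \sum_(i <- s) g (F i).
Proof.
move=> hg I s F; elim: s => [|i s IH]; first by rewrite !big_nil klinear_endo0.
by rewrite !big_cons klinear_endoD // IH.
Qed.

Lemma balanced2_mul (M : zmodType) (B : H -> H -> M) u v : balanced2 B ->
  balanced2 (fun a c => B (u * a) (v * c)).
Proof.
by case=> BDl BDr BZ; split=> *; rewrite ?mulrDr ?BDl ?BDr // -!scalerAr BZ.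
Qed.

End LinearMaps.

Section Frobenius.
Variables (k : comPzRingType) (H : algType k) (f : H -> k)
  (n : nat) (x y : 'I_n -> H).
Hypothesis dual_basis : forall a, \sum_(i < n) f (a * x i) *: y i = a.

Lemma frobenius_eq z z' : (forall a, f (z * a) = f (z' * a)) -> z = z'.
Proof.
move=> h; rewrite -[z]dual_basis -[z']dual_basis.
by apply: eq_bigr => i _; rewrite h.
Qed.

Lemma teq2_frobenius s s' :
  (forall a, \sum_(p <- s) f (p.2 * a) *: p.1 = \sum_(p <- s') f (p.2 * a) *: p.1) ->
  teq2 s s'.
Proof.
move=> h; have coord := teq2_coord (fun v => esym (dual_basis v)).
apply: teq2_trans (coord s) _; apply: teq2_trans (teq2_sym (coord s')).
by under eq_map => i do rewrite h; apply: teq2_refl.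
Qed.

End Frobenius.

Section FHAlgebra.
Variables (k : comPzRingType) (H : algType k)
  (Delta : H -> tens2 H) (eps : H -> k) (f : H -> k) (S : H -> H)
  (t b binv : H) (n : nat) (x y : 'I_n -> H).
Hypotheses
  (Delta_linear : forall (r : k) a c, teq2 (Delta (r *: a + c))
     ([seq (r *: p.1, p.2) | p <- Delta a] ++ Delta c))
  (DeltaM : forall a c, teq2 (Delta (a * c))
     [seq (p.1 * q.1, p.2 * q.2) | p <- Delta a, q <- Delta c])
  (Delta1 : teq2 (Delta 1) [:: (1, 1)])
  (Delta_coassoc : forall a, teq3
     (flatten [seq [seq (q.1, q.2, p.2) | q <- Delta p.1] | p <- Delta a])
     (flatten [seq [seq (p.1, q.1, q.2) | q <- Delta p.2] | p <- Delta a]))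
  (eps_linear : klinear_form eps) (epsM : forall a c, eps (a * c) = eps a * eps c)
  (eps1 : eps 1 = 1)
  (counit : forall a, \sum_(p <- Delta a) eps p.1 *: p.2 = a /\
                      \sum_(p <- Delta a) eps p.2 *: p.1 = a)
  (f_linear : klinear_form f)
  (dual_basis : forall a, \sum_(i < n) f (a * x i) *: y i = a)
  (f_integral : is_right_integral Delta f)
  (S_linear : klinear_endo S)
  (antipode : forall a, \sum_(p <- Delta a) S p.1 * p.2 = eps a *: 1 /\
                        \sum_(p <- Delta a) p.1 * S p.2 = eps a *: 1)
  (t_norm : is_right_norm eps f t)
  (b_distinguished : is_right_distinguished Delta f b)
  (b_binv : b * binv = 1) (binv_b : binv * b = 1).

Let fD := klinear_formD f_linear.
Let fZ := klinear_formZ f_linear.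
Let f_sum := klinear_form_sum f_linear.
Let SD := klinear_endoD S_linear.
Let SZ := klinear_endoZ S_linear.
Let S_sum := klinear_endo_sum S_linear.

Lemma big_DeltaM (M : zmodType) (B : H -> H -> M) : balanced2 B -> forall a c,
  \sum_(p <- Delta (a * c)) B p.1 p.2 =
  \sum_(p <- Delta a) \sum_(q <- Delta c) B (p.1 * q.1) (p.2 * q.2).
Proof. by move=> hB a c; rewrite (eq_big_teq2 hB (DeltaM a c)) big_allpairs_dep. Qed.

Lemma big_Delta_coassoc (M : zmodType) (F : H -> H -> H -> M) : balanced3 F ->
  forall a, \sum_(p <- Delta a) \sum_(q <- Delta p.1) F q.1 q.2 p.2 =
            \sum_(p <- Delta a) \sum_(q <- Delta p.2) F p.1 q.1 q.2.
Proof.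
move=> hF a; have := eq_big_teq3 hF (Delta_coassoc a).
rewrite !big_flatten !big_map /=; under eq_bigr => i _ do rewrite big_map.
by move=> ->; under eq_bigr => i _ do rewrite big_map.
Qed.

Lemma klinear_form_conv (g h : H -> k) : klinear_form g -> klinear_form h ->
  klinear_form (conv Delta g h).
Proof.
move=> hg hh r a c; rewrite /conv.
have hB : balanced2 (fun u v => g u * h v).
  by split=> *; rewrite ?klinear_formD ?klinear_formZ // ?mulrDl ?mulrDr //; ring.
rewrite (eq_big_teq2 hB (Delta_linear r a c)) big_cat big_map /= mulr_sumr.
by congr (_ + _); apply: eq_bigr => p _; rewrite klinear_formZ // mulrA.
Qed.

Lemma f_norm : f t = 1.
Proof. by rewrite -[t]mulr1 t_norm eps1. Qed.

Lemma big_Delta_f2 z : \sum_(p <- Delta z) f p.2 *: p.1 = f z *: b.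
Proof.
apply: (frobenius_eq dual_basis) => c.
rewrite mulr_suml f_sum -scalerAl fZ mulrC.
have := b_distinguished (klinear_form_mulr c f_linear) z; rewrite /conv /= => <-.
by apply: eq_bigr => p _; rewrite -scalerAl fZ mulrC.
Qed.

Lemma eps_distinguished : eps b = 1.
Proof.
have := b_distinguished eps_linear t; rewrite /conv f_norm mulr1 => <-.
rewrite -[RHS]f_norm -{2}(proj1 (counit t)) f_sum.
by apply: eq_bigr => p _; rewrite fZ.
Qed.

Lemma eps_binv : eps binv = 1.
Proof. by rewrite -[LHS]mul1r -{1}eps_distinguished -epsM b_binv eps1. Qed.

Lemma big_Delta_distinguished (g h : H -> k) : klinear_form g -> klinear_form h ->
  \sum_(p <- Delta b) g p.1 * h p.2 = g b * h b.
Proof.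
move=> hg hh; have := b_distinguished (klinear_form_conv hg hh) t.
rewrite f_norm mulr1 /conv => <-.
have hF : balanced3 (fun a1 a2 a3 => g a1 * h a2 * f a3).
  by split=> *; rewrite ?klinear_formD ?klinear_formZ ?fD ?fZ // ?mulrDl ?mulrDr //; ring.
under eq_bigr => p _ do rewrite mulr_suml.
rewrite (big_Delta_coassoc hF t).
transitivity (\sum_(p <- Delta t) g p.1 * (h b * f p.2)).
  apply: eq_bigr => p _; have := b_distinguished hh p.2; rewrite /conv => <-.
  by rewrite mulr_sumr; apply: eq_bigr => q _; rewrite mulrA.
have := b_distinguished hg t; rewrite /conv f_norm mulr1 => gb.
under eq_bigr => p _ do rewrite mulrCA.
by rewrite -mulr_sumr gb mulrC.
Qed.

Lemma Delta_distinguished : teq2 (Delta b) [:: (b, b)].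
Proof.
apply: (teq2_frobenius dual_basis) => a; rewrite big_seq1 /=.
apply: (frobenius_eq dual_basis) => c.
rewrite mulr_suml f_sum -scalerAl fZ mulrC.
rewrite -(big_Delta_distinguished (klinear_form_mulr c f_linear) (klinear_form_mulr a f_linear)).
by apply: eq_bigr => p _; rewrite -scalerAl fZ mulrC.
Qed.

Lemma Delta_binv : teq2 (Delta binv) [:: (binv, binv)].
Proof.
apply: (teq2_frobenius dual_basis) => a; rewrite big_seq1 /=.
pose B u v := f (v * binv * a) *: (u * binv).
have hB : balanced2 B.
  rewrite /B; split=> *; rewrite ?mulrDl ?fD ?scalerDl ?scalerDr //.
  by rewrite -!scalerAl fZ !scalerA mulrC.
have := big_DeltaM hB binv b.
rewrite binv_b (eq_big_teq2 hB Delta1) big_seq1 /B /= !mul1r => ->.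
apply: eq_bigr => p _.
rewrite (eq_big_teq2 (balanced2_mul p.1 p.2 hB) Delta_distinguished) big_seq1 /B /=.
by rewrite -!mulrA b_binv !mulr1 [b * (binv * a)]mulrA b_binv mul1r.
Qed.

Lemma integral_antipode a c : \sum_(p <- Delta a) f (p.1 * c) *: p.2 =
  \sum_(q <- Delta c) f (a * q.1) *: S q.2.
Proof.
symmetry.
transitivity (\sum_(q <- Delta c)
    (\sum_(r <- Delta (a * q.1)) f r.1 *: r.2) * S q.2).
  by apply: eq_bigr => q _; rewrite f_integral -scalerAl mul1r.
have hB : balanced2 (fun u v => f u *: v).
  by split=> *; rewrite ?fD ?scalerDl ?scalerDr // fZ scalerA mulrC -scalerA.
under eq_bigr => q _ do rewrite (big_DeltaM hB a q.1).
pose F a1 a2 a3 := \sum_(p <- Delta a) f (p.1 * a1) *: (p.2 * a2 * S a3).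
have hF : balanced3 F.
  rewrite /F; split=> *; rewrite -?big_split; apply: eq_bigr => p _;
    rewrite ?mulrDr ?mulrDl ?SD ?mulrDr ?fD ?scalerDl ?scalerDr //.
    by rewrite -scalerAr fZ -scalerAr -scalerAl scalerA mulrC -scalerA.
  by rewrite SZ -!scalerAr -!scalerAl.
transitivity (\sum_(q <- Delta c) \sum_(u <- Delta q.1) F u.1 u.2 q.2).
  apply: eq_bigr => q _; rewrite mulr_suml exchange_big /F.
  apply: eq_bigr => u _; rewrite mulr_suml; apply: eq_bigr => p _.
  by rewrite -scalerAl.
rewrite (big_Delta_coassoc hF c) /F.
transitivity (\sum_(q <- Delta c) \sum_(p <- Delta a)
   f (p.1 * q.1) *: (p.2 * (eps q.2 *: 1))).
  apply: eq_bigr => q _; rewrite exchange_big; apply: eq_bigr => p _.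
  rewrite -(proj2 (antipode q.2)) mulr_sumr scaler_sumr.
  by apply: eq_bigr => w _; rewrite mulrA.
rewrite exchange_big; apply: eq_bigr => p _.
rewrite -[in RHS](proj2 (counit c)) mulr_sumr f_sum scaler_suml.
apply: eq_bigr => q _.
by rewrite -[p.1 * (_ *: _)]scalerAr fZ -scalerAr mulr1 scalerA mulrC.
Qed.

Lemma big_Delta_norm_f1 a : \sum_(p <- Delta t) f (p.1 * a) *: p.2 = S a.
Proof.
rewrite integral_antipode -[in RHS](proj1 (counit a)) S_sum.
by apply: eq_bigr => q _; rewrite t_norm SZ.
Qed.

Definition norm_phi c := \sum_(p <- Delta t) f (p.2 * c) *: p.1.

Lemma antipode_norm_phi_mulr c : S (norm_phi c) * b = c.
Proof.
rewrite /norm_phi S_sum mulr_suml.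
transitivity (\sum_(p <- Delta t) S p.1 * (f (p.2 * c) *: b)).
  by apply: eq_bigr => p _; rewrite SZ -scalerAl scalerAr.
under eq_bigr => p _ do rewrite -big_Delta_f2.
have hB : balanced2 (fun u v => f v *: u).
  by split=> *; rewrite ?fD ?scalerDl ?scalerDr // fZ scalerA mulrC.
under eq_bigr => p _ do rewrite (big_DeltaM hB p.2 c).
pose F a1 a2 a3 := \sum_(u <- Delta c) f (a3 * u.2) *: (S a1 * a2 * u.1).
have hF : balanced3 F.
  rewrite /F; split=> *; rewrite -?big_split; apply: eq_bigr => u _;
    rewrite ?SD ?mulrDr ?mulrDl ?fD ?scalerDl ?scalerDr //.
    by rewrite SZ -scalerAr -!scalerAl.
  by rewrite -scalerAl fZ -scalerAr -!scalerAl scalerA mulrC.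
transitivity (\sum_(p <- Delta t) \sum_(q <- Delta p.2) F p.1 q.1 q.2).
  apply: eq_bigr => p _; rewrite mulr_sumr /F; apply: eq_bigr => q _.
  rewrite mulr_sumr; apply: eq_bigr => u _.
  by rewrite -scalerAr mulrA.
rewrite -(big_Delta_coassoc hF t) /F.
transitivity (\sum_(p <- Delta t) \sum_(u <- Delta c)
   f (p.2 * u.2) *: (eps p.1 *: u.1)).
  apply: eq_bigr => p _; rewrite exchange_big; apply: eq_bigr => u _.
  by rewrite -scaler_sumr -mulr_suml (proj1 (antipode p.1)) -scalerAl mul1r.
rewrite exchange_big -[in RHS](proj2 (counit c)).
apply: eq_bigr => u _; rewrite -t_norm -[in RHS](proj1 (counit t)).
rewrite mulr_suml f_sum scaler_suml; apply: eq_bigr => p _.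
by rewrite -scalerAl fZ scalerA mulrC.
Qed.

Lemma antipode_norm_phi c : S (norm_phi c) = c * binv.
Proof. by rewrite -{2}(antipode_norm_phi_mulr c) -mulrA b_binv mulr1. Qed.

Lemma big_antipode_mul_binv c : \sum_(q <- Delta c) S (q.1 * binv) * q.2 = eps c *: b.
Proof.
have hB : balanced2 (fun u v => S u * v).
  by split=> *; rewrite ?SD ?mulrDl ?mulrDr // SZ -scalerAl scalerAr.
have := proj1 (antipode (c * binv)).
rewrite epsM eps_binv mulr1 (big_DeltaM hB c binv).
under eq_bigr => q _ do
  rewrite (eq_big_teq2 (balanced2_mul q.1 q.2 hB) Delta_binv) big_seq1 /=.
move/(congr1 (fun z => z * b)); rewrite /= mulr_suml -scalerAl mul1r => <-.
by apply: eq_bigr => q _; rewrite -!mulrA binv_b mulr1.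
Qed.

Lemma antipode_mul_binv c : S (c * binv) = b * S c.
Proof.
rewrite -[in RHS](proj1 (counit c)) S_sum mulr_sumr.
transitivity (\sum_(q <- Delta c) \sum_(w <- Delta q.1) S (w.1 * binv) * w.2 * S q.2);
  last first.
  apply: eq_bigr => q _; rewrite -mulr_suml big_antipode_mul_binv.
  by rewrite SZ -scalerAl scalerAr.
pose F a1 a2 a3 := S (a1 * binv) * a2 * S a3.
have hF : balanced3 F.
  rewrite /F; split=> *; rewrite ?mulrDl ?SD ?mulrDl ?mulrDr ?mulrDl //.
    by rewrite -scalerAl SZ -!scalerAl -scalerAr -scalerAl.
  by rewrite SZ -scalerAr -scalerAl scalerAr.
rewrite (big_Delta_coassoc hF c) /F.
rewrite -[in LHS](proj2 (counit c)) mulr_suml S_sum.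
apply: eq_bigr => q _.
under eq_bigr => w _ do rewrite -mulrA.
by rewrite -mulr_sumr (proj2 (antipode q.2)) -scalerAl SZ -scalerAr mulr1.
Qed.

Lemma Delta_norm_swap : teq2 [seq (p.2, p.1) | p <- Delta t]
  [seq (binv * S (S p.1), p.2) | p <- Delta t].
Proof.
apply: (teq2_frobenius dual_basis) => a; rewrite !big_map /= big_Delta_norm_f1.
transitivity (binv * S (S (norm_phi a))).
  by rewrite antipode_norm_phi antipode_mul_binv mulrA binv_b mul1r.
rewrite /norm_phi !S_sum mulr_sumr; apply: eq_bigr => p _.
by rewrite !SZ scalerAr.
Qed.

End FHAlgebra.

Theorem mainTheorem1 (k : comPzRingType) (H : algType k)
  (Delta : H -> tens2 H) (eps : H -> k) (f : H -> k) (S : H -> H)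
  (t b binv : H) :
  is_FH_algebra Delta eps f ->
  is_antipode Delta eps S ->
  is_right_norm eps f t ->
  is_right_distinguished Delta f b ->
  b * binv = 1 -> binv * b = 1 ->
  teq2 [seq (p.2, p.1) | p <- Delta t]
       [seq (binv * S (S p.1), p.2) | p <- Delta t].
Proof.
move=> [[Delta_linear DeltaM Delta1 Delta_coassoc [eps_linear epsM eps1 counit]]
  _ [f_linear [n [x [y frob]]]] f_integral] [S_linear antipode].
have dual_basis a := proj2 (frob a).
exact: (Delta_norm_swap Delta_linear DeltaM Delta1 Delta_coassoc eps_linear epsM
  eps1 counit f_linear dual_basis f_integral S_linear antipode).
Qed.
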